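(* The variety $\mathsf{V}(S_{(4,474)})$ is the ai-semiring variety defined by the identities $xy\approx yx$, $x^2y\approx xy$, $xy\approx xy+xyz$.
   Context: An ai-semiring is an algebra $(S,+,\cdot)$ with $(S,+)$ a semilattice, $(S,\cdot)$ a semigroup, and both distributive laws. $\mathsf{V}(S)$ is the variety generated by $S$; ''the ai-semiring variety defined by identities $\Sigma$'' is the class of all ai-semirings satisfying $\Sigma$. $S_{(4,474)}$ has carrier $\{1,2,3,4\}$; addition: $x+x=x$, $2+x=x$, $1+x=1$ for all $x$, $3+4=1$; multiplication (row $a$, column $b$ gives $a\cdot b$): row $1$: $3,2,3,3$; row $2$: $2,2,2,2$; row $3$: $3,2,3,3$; row $4$: $3,2,3,3$. *)

Record aiSemiring := AiSemiring {
  carrier :> Type;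
  sadd : carrier -> carrier -> carrier;
  smul : carrier -> carrier -> carrier;
  sadd_assoc : forall x y z, sadd x (sadd y z) = sadd (sadd x y) z;
  sadd_comm : forall x y, sadd x y = sadd y x;
  sadd_idem : forall x, sadd x x = x;
  smul_assoc : forall x y z, smul x (smul y z) = smul (smul x y) z;
  smul_addl : forall x y z, smul x (sadd y z) = sadd (smul x y) (smul x z);
  smul_addr : forall x y z, smul (sadd y z) x = sadd (smul y x) (smul z x)
}.

Arguments sadd {a} _ _.
Arguments smul {a} _ _.

Inductive term : Type :=
| Var : nat -> term
| Add : term -> term -> term
| Mul : term -> term -> term.

Fixpoint eval (A : aiSemiring) (v : nat -> A) (t : term) : A :=
  match t with
  | Var n => v n
  | Add t1 t2 => sadd (eval A v t1) (eval A v t2)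
  | Mul t1 t2 => smul (eval A v t1) (eval A v t2)
  end.

Definition satisfies (A : aiSemiring) (u v : term) : Prop :=
  forall val : nat -> A, eval A val u = eval A val v.

(** Membership in the variety V(S) generated by S: A satisfies every identity
    satisfied by S (V(S) = Mod(Id(S)), equivalently HSP(S) by Birkhoff). *)
Definition in_variety_generated_by (S A : aiSemiring) : Prop :=
  forall u v : term, satisfies S u v -> satisfies A u v.

Inductive E4 : Type := e1 | e2 | e3 | e4.

Definition add474 (a b : E4) : E4 :=
  match a, b with
  | e2, x => x
  | x, e2 => x
  | e1, _ => e1
  | _, e1 => e1
  | e3, e3 => e3
  | e4, e4 => e4
  | e3, e4 => e1
  | e4, e3 => e1
  end.

Definition mul474 (a b : E4) : E4 :=
  match a, b with
  | e2, _ => e2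
  | _, e2 => e2
  | _, _ => e3
  end.

Definition S474 : aiSemiring.
Proof.
  refine (@AiSemiring E4 add474 mul474 _ _ _ _ _ _);
    intros; repeat match goal with x : E4 |- _ => destruct x; clear x end;
    reflexivity.
Defined.

From Pilot Require Import Defs.
From Stdlib Require Import List Bool Arith.
Import ListNotations.

(* Every term is the join of its monomials (words in the variables), for the
   order a <= b iff a + b = b.  In S474 every product is 2 or 3, and 2 is the
   bottom.  Sending the letters of a monomial w of v to 4 and all other
   variables to 2 shows that S474 satisfies u = v only if w is covered by a
   monomial w' of u: both are single letters or both have length at least 2,
   and the letters of w' occur in w.  Conversely, the three identities make
   products commutative and idempotent in each letter and give xyz <= xy, so
   in their models a monomial lies below any monomial covering it.  Hence
   v <= u and, symmetrically, u <= v. *)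

Definition sle {A : aiSemiring} (a b : A) : Prop := sadd a b = b.

Section Order.
Context {A : aiSemiring}.
Implicit Types a b c : A.

Lemma sle_refl a : sle a a.
Proof. apply sadd_idem. Qed.

Lemma sle_trans a b c : sle a b -> sle b c -> sle a c.
Proof. unfold sle; intros Hab Hbc. rewrite <- Hbc, sadd_assoc, Hab. reflexivity. Qed.

Lemma sle_antisym a b : sle a b -> sle b a -> a = b.
Proof. unfold sle; intros Hab Hba. rewrite <- Hab, sadd_comm. symmetry; exact Hba. Qed.

Lemma sle_addl a b : sle a (sadd a b).
Proof. unfold sle. rewrite sadd_assoc, sadd_idem. reflexivity. Qed.

Lemma sle_addr a b : sle b (sadd a b).
Proof. rewrite sadd_comm. apply sle_addl. Qed.

Lemma sle_add a b c : sle a c -> sle b c -> sle (sadd a b) c.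
Proof. unfold sle; intros Hac Hbc. rewrite <- sadd_assoc, Hbc, Hac. reflexivity. Qed.

Lemma sle_mul a a' b b' : sle a a' -> sle b b' -> sle (smul a b) (smul a' b').
Proof.
  intros Ha Hb. apply sle_trans with (smul a' b); unfold sle.
  - rewrite <- smul_addr, Ha. reflexivity.
  - rewrite <- smul_addl, Hb. reflexivity.
Qed.

End Order.

(* A monomial [(x, l)] stands for the nonempty word [x :: l]. *)
Definition monomial := (nat * list nat)%type.

Definition letters (w : monomial) : list nat := fst w :: snd w.

Definition is_long (w : monomial) : bool :=
  match snd w with [] => false | _ :: _ => true end.

Definition covers (w' w : monomial) : Prop :=
  is_long w' = is_long w /\ incl (letters w') (letters w).

Definition mcat (w1 w2 : monomial) : monomial := (fst w1, snd w1 ++ letters w2).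

Fixpoint monomials (t : term) : list monomial :=
  match t with
  | Var n => [(n, [])]
  | Defs.Add t1 t2 => monomials t1 ++ monomials t2
  | Mul t1 t2 => flat_map (fun w1 => map (mcat w1) (monomials t2)) (monomials t1)
  end.

Fixpoint mprod {A : aiSemiring} (v : nat -> A) (x : nat) (l : list nat) : A :=
  match l with
  | [] => v x
  | y :: l' => smul (v x) (mprod v y l')
  end.

Definition mval {A : aiSemiring} (v : nat -> A) (w : monomial) : A :=
  mprod v (fst w) (snd w).

Section Monomials.
Context {A : aiSemiring} (v : nat -> A).

Lemma mprod_app x l1 y l2 :
  mprod v x (l1 ++ y :: l2) = smul (mprod v x l1) (mprod v y l2).
Proof.
  revert x; induction l1 as [|z l1 IH]; intros x; simpl; [reflexivity|].
  rewrite IH, smul_assoc. reflexivity.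
Qed.

Lemma mval_mcat w1 w2 : mval v (mcat w1 w2) = smul (mval v w1) (mval v w2).
Proof. destruct w1, w2. apply mprod_app. Qed.

Lemma mval_le_eval t w : In w (monomials t) -> sle (mval v w) (eval A v t).
Proof.
  revert w; induction t as [n | t1 IH1 t2 IH2 | t1 IH1 t2 IH2]; simpl; intros w Hw.
  - destruct Hw as [<- | []]. apply sle_refl.
  - apply in_app_or in Hw as [Hw | Hw].
    + eapply sle_trans; [apply IH1, Hw | apply sle_addl].
    + eapply sle_trans; [apply IH2, Hw | apply sle_addr].
  - apply in_flat_map in Hw as [w1 [Hw1 Hw]].
    apply in_map_iff in Hw as [w2 [<- Hw2]].
    rewrite mval_mcat. apply sle_mul; auto.
Qed.

(* Generalised over a join-preserving [f] so that the induction passes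
   through both factors of a product. *)
Lemma map_eval_le (f : A -> A) b t :
  (forall a a', f (sadd a a') = sadd (f a) (f a')) ->
  (forall w, In w (monomials t) -> sle (f (mval v w)) b) ->
  sle (f (eval A v t)) b.
Proof.
  revert f; induction t as [n | t1 IH1 t2 IH2 | t1 IH1 t2 IH2]; simpl;
    intros f Hf Hb.
  - apply (Hb (n, [])). left; reflexivity.
  - rewrite Hf. apply sle_add; [apply IH1 | apply IH2]; auto;
      intros w Hw; apply Hb, in_or_app; auto.
  - apply (IH2 (fun a => f (smul (eval A v t1) a))).
    { intros a a'. rewrite smul_addl. apply Hf. }
    intros w2 Hw2.
    apply (IH1 (fun a => f (smul a (mval v w2)))).
    { intros a a'. rewrite smul_addr. apply Hf. }
    intros w1 Hw1. rewrite <- mval_mcat. apply Hb, in_flat_map.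
    exists w1; split; [exact Hw1|]. apply in_map_iff. exists w2; auto.
Qed.

Lemma eval_le b t :
  (forall w, In w (monomials t) -> sle (mval v w) b) -> sle (eval A v t) b.
Proof. apply (map_eval_le (fun a => a)). reflexivity. Qed.

End Monomials.

Definition indicator (P : nat -> bool) (n : nat) : S474 := if P n then e4 else e2.

Definition shape_value (long : bool) : S474 := if long then e3 else e4.

Lemma mval_indicator P w :
  mval (indicator P) w =
  if forallb P (letters w) then shape_value (is_long w) else e2.
Proof.
  destruct w as [x l]; unfold mval, letters, is_long; simpl.
  revert x; induction l as [|z l IH]; intros x; simpl.
  - unfold indicator. destruct (P x); reflexivity.
  - rewrite IH. unfold indicator.
    destruct (P x), (P z), (forallb P l), l; reflexivity.
Qed.

Lemma forallb_in_dec_incl (l l' : list nat) :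
  forallb (fun n => if in_dec Nat.eq_dec n l then true else false) l' = true <->
  incl l' l.
Proof.
  rewrite forallb_forall.
  split; intros H n Hn; specialize (H n Hn); destruct in_dec; easy.
Qed.

Lemma S474_cover u t w :
  satisfies S474 u t -> In w (monomials t) ->
  exists w', In w' (monomials u) /\ covers w' w.
Proof.
  intros Hut Hw.
  set (P n := if in_dec Nat.eq_dec n (letters w) then true else false).
  set (covered w' := Bool.eqb (is_long w') (is_long w) && forallb P (letters w')).
  destruct (existsb covered (monomials u)) eqn:E.
  - apply existsb_exists in E as [w' [Hw' Hc]].
    exists w'; split; [exact Hw'|].
    apply andb_prop in Hc as [Hshape Hincl].
    split; [apply eqb_prop, Hshape | apply forallb_in_dec_incl, Hincl].
  - (* Without a cover, every monomial of u takes the value 2 or the value of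
       the opposite shape, and e3, e4 are incomparable. *)
    exfalso.
    assert (Hu : sle (eval S474 (indicator P) u) (shape_value (negb (is_long w)))).
    { apply eval_le. intros w' Hw'.
      destruct (covered w') eqn:Hc.
      { exfalso. rewrite <- not_true_iff_false in E.
        apply E, existsb_exists. eauto. }
      rewrite mval_indicator. unfold covered in Hc.
      destruct (forallb P (letters w')), (is_long w'), (is_long w);
        simpl in Hc; try discriminate; reflexivity. }
    assert (Ht : sle (shape_value (is_long w)) (eval S474 (indicator P) t)).
    { assert (Hall : forallb P (letters w) = true)
        by apply forallb_in_dec_incl, incl_refl.
      pose proof (mval_le_eval (indicator P) t w Hw) as Hle.
      rewrite mval_indicator, Hall in Hle. exact Hle. }
    rewrite <- Hut in Ht. pose proof (sle_trans _ _ _ Ht Hu) as Hcontra.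
    destruct (is_long w); discriminate.
Qed.

Section Identities.
Context {A : aiSemiring} (v : nat -> A).
Hypothesis mul_comm : forall x y : A, smul x y = smul y x.
Hypothesis mul_sq_l : forall x y : A, smul (smul x x) y = smul x y.
Hypothesis mul_le_l : forall x y z : A, smul x y = sadd (smul x y) (smul (smul x y) z).

Lemma mprod_letter_absorb y x l :
  l <> [] -> In y (x :: l) -> smul (v y) (mprod v x l) = mprod v x l.
Proof.
  revert x; induction l as [|z l IH]; intros x Hl Hy; [congruence|]. simpl.
  destruct Hy as [<- | Hy].
  { rewrite smul_assoc, mul_sq_l. reflexivity. }
  destruct l as [|z' l].
  - destruct Hy as [<- | []]. simpl.
    rewrite (mul_comm (v x)), smul_assoc, mul_sq_l. reflexivity.
  - rewrite smul_assoc, (mul_comm (v y)), <- smul_assoc, IH;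
      [reflexivity | discriminate | exact Hy].
Qed.

Lemma mprod_absorb y l' x l :
  l <> [] -> incl (y :: l') (x :: l) ->
  smul (mprod v y l') (mprod v x l) = mprod v x l.
Proof.
  revert y; induction l' as [|z l' IH]; intros y Hl Hincl; simpl;
    apply incl_cons_inv in Hincl as [Hy Hincl].
  - apply mprod_letter_absorb; assumption.
  - rewrite <- smul_assoc, IH by assumption.
    apply mprod_letter_absorb; assumption.
Qed.

Lemma mval_le_cover w w' : covers w' w -> sle (mval v w) (mval v w').
Proof.
  destruct w as [x l], w' as [y l']; unfold covers, letters, is_long, mval; simpl.
  intros [Hshape Hincl].
  destruct l' as [|z l'], l as [|x' l]; try discriminate.
  - destruct (Hincl y) as [<- | []]; [left; reflexivity | apply sle_refl].
  - pose proof (mul_le_l (v y) (mprod v z l') (mprod v x (x' :: l))) as Hle.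
    change (smul (v y) (mprod v z l')) with (mprod v y (z :: l')) in Hle.
    rewrite mprod_absorb in Hle by (assumption || discriminate).
    unfold sle. rewrite sadd_comm. symmetry. exact Hle.
Qed.

Lemma satisfies_S474_eval_le u t :
  satisfies S474 u t -> sle (eval A v t) (eval A v u).
Proof.
  intros Hut. apply eval_le. intros w Hw.
  destruct (S474_cover u t w Hut Hw) as [w' [Hw' Hcov]].
  eapply sle_trans; [apply mval_le_cover, Hcov | apply mval_le_eval, Hw'].
Qed.

End Identities.

Lemma identities_in_variety_S474 (A : aiSemiring) :
  (forall x y : A, smul x y = smul y x) ->
  (forall x y : A, smul (smul x x) y = smul x y) ->
  (forall x y z : A, smul x y = sadd (smul x y) (smul (smul x y) z)) ->
  in_variety_generated_by S474 A.
Proof.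
  intros Hcomm Hsq Hle u t Hut v.
  apply sle_antisym; apply satisfies_S474_eval_le; auto.
  intros s. symmetry. apply Hut.
Qed.

Definition val3 {T : Type} (x y z : T) (n : nat) : T :=
  match n with 0 => x | 1 => y | _ => z end.

Lemma in_variety_S474_identities (A : aiSemiring) :
  in_variety_generated_by S474 A ->
  (forall x y : A, smul x y = smul y x) /\
  (forall x y : A, smul (smul x x) y = smul x y) /\
  (forall x y z : A, smul x y = sadd (smul x y) (smul (smul x y) z)).
Proof.
  intros H; split; [|split].
  - intros x y.
    assert (Hs : satisfies S474 (Mul (Var 0) (Var 1)) (Mul (Var 1) (Var 0)))
      by (intros s; simpl; destruct (s 0), (s 1); reflexivity).
    exact (H _ _ Hs (val3 x y y)).
  - intros x y.
    assert (Hs : satisfies S474 (Mul (Mul (Var 0) (Var 0)) (Var 1)) (Mul (Var 0) (Var 1)))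
      by (intros s; simpl; destruct (s 0), (s 1); reflexivity).
    exact (H _ _ Hs (val3 x y y)).
  - intros x y z.
    assert (Hs : satisfies S474 (Mul (Var 0) (Var 1))
                   (Defs.Add (Mul (Var 0) (Var 1)) (Mul (Mul (Var 0) (Var 1)) (Var 2))))
      by (intros s; simpl; destruct (s 0), (s 1), (s 2); reflexivity).
    exact (H _ _ Hs (val3 x y z)).
Qed.

Theorem proposition7p1 :
  forall A : aiSemiring,
    in_variety_generated_by S474 A <->
    ((forall x y : A, smul x y = smul y x) /\
     (forall x y : A, smul (smul x x) y = smul x y) /\
     (forall x y z : A, smul x y = sadd (smul x y) (smul (smul x y) z))).
Proof.
  intros A; split.
  - apply in_variety_S474_identities.
  - intros (Hcomm & Hsq & Hle). exact (identities_in_variety_S474 A Hcomm Hsq Hle).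
Qed.
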